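(* Let $n\geq 4$ and let $\nu :B_n\to GL_{n+1}(\mathbb{C})$ be a non-trivial homogeneous $3$-local representation of $B_n$. Then $\nu$ is equivalent to one of the eight representations $\nu_j$, $1\leq j\leq 8$, given by $\nu_j(\sigma_i)=\mathrm{diag}(I_{i-1},M_j,I_{n-i-1})$ for all $1\leq i \leq n-1$, where: (1) $M_1=\begin{pmatrix} 1&0&0\\ 0&m_{22}&m_{23}\\ 0&\frac{1-m_{22}}{m_{23}}&0\end{pmatrix}$, with $m_{22}\neq1$, $m_{23}\neq0$; (2) $M_2=\begin{pmatrix} 0&m_{12}&0\\ \frac{1-m_{22}}{m_{12}}&m_{22}&0\\ 0&0&1\end{pmatrix}$, with $m_{22}\neq1$, $m_{12}\neq0$; (3) $M_3=\begin{pmatrix} 1&-\frac{m_{22}}{m_{32}}&0\\ 0&m_{22}&0\\ 0&m_{32}&1\end{pmatrix}$, with $m_{22}m_{32}\neq0$; (4) $M_4=\begin{pmatrix} 1&0&0\\ -\frac{m_{22}}{m_{23}}&m_{22}&m_{23}\\ 0&0&1\end{pmatrix}$, with $m_{23}m_{22}\neq0$; (5) $M_5=\begin{pmatrix} 1&0&0\\ 0&0&m_{23}\\ 0&m_{32}&1-m_{23}m_{32}\end{pmatrix}$, with $m_{23}m_{32}\neq0$; (6) $M_6=\begin{pmatrix} 1-m_{12}m_{21}&m_{12}&0\\ m_{21}&0&0\\ 0&0&1\end{pmatrix}$, with $m_{12}m_{21}\neq0$; (7) $M_7=\begin{pmatrix} 1&0&0\\ 0&0&m_{23}\\ 0&m_{32}&0\end{pmatrix}$,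 with $m_{23}m_{32}\neq0$; (8) $M_8=\begin{pmatrix} 0&m_{12}&0\\ m_{21}&0&0\\ 0&0&1\end{pmatrix}$, with $m_{12}m_{21}\neq0$; all entries being complex numbers.
   Context: The braid group $B_n$ has generators $\sigma_1,\dots,\sigma_{n-1}$ with relations $\sigma_i\sigma_{i+1}\sigma_i=\sigma_{i+1}\sigma_i\sigma_{i+1}$ ($1\le i\le n-2$) and $\sigma_i\sigma_j=\sigma_j\sigma_i$ ($|i-j|\ge2$). A representation $\nu:B_n\to GL_{n+1}(\mathbb{C})$ is homogeneous $3$-local if there is a matrix $M\in M_3(\mathbb{C})$ with $\nu(\sigma_i)=\mathrm{diag}(I_{i-1},M,I_{n-i-1})$ (block diagonal, $I_r$ the $r\times r$ identity) for all $1\le i\le n-1$. ''Non-trivial'' means not sending every $\sigma_i$ to the identity. Two representations are equivalent if they are conjugate by a fixed invertible matrix. *)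

(* C = (complex R) with R : realType, i.e. the complex numbers R[i]. *)
From HB Require Import structures.
From mathcomp Require Import all_boot all_algebra.
From mathcomp Require Import reals.
From mathcomp Require Import complex.
Set Implicit Arguments. Unset Strict Implicit. Unset Printing Implicit Defensive.
Import GRing.Theory.
Local Open Scope ring_scope.

(* local_mx n i M = diag(I_{i-1}, M, I_{n-i-1}) in 'M_(n+1), for 1 <= i <= n-1. *)
Definition local_mx {F : pzRingType} (n i : nat) (M : 'M[F]_3) : 'M[F]_(n.+1) :=
  \matrix_(r < n.+1, c < n.+1)
    if [&& (i.-1 <= r)%N, (r < i.+2)%N, (i.-1 <= c)%N & (c < i.+2)%N]
    then M (inord (r - i.-1)) (inord (c - i.-1))
    else (r == c)%:R.

(* nu : sigma_i |-> A i (1 <= i <= n-1) defines a representation of B_n in GL_{n+1}: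
   the images are invertible and satisfy the braid relations of the presentation. *)
Definition braid_rep {F : comUnitRingType} (n : nat) (A : nat -> 'M[F]_(n.+1)) : Prop :=
  [/\ forall i, (1 <= i <= n.-1)%N -> A i \in unitmx,
      forall i, (1 <= i)%N -> (i.+1 <= n.-1)%N ->
        A i *m A i.+1 *m A i = A i.+1 *m A i *m A i.+1
    & forall i j, (1 <= i <= n.-1)%N -> (1 <= j <= n.-1)%N -> (i.+1 < j)%N ->
        A i *m A j = A j *m A i].

Definition homog_3local {F : comUnitRingType} (n : nat) (M : 'M[F]_3) : Prop :=
  braid_rep (fun i => local_mx n i M).

Definition nontrivial_rep {F : comUnitRingType} (n : nat) (A : nat -> 'M[F]_(n.+1)) : Prop :=
  exists i, (1 <= i <= n.-1)%N /\ A i != 1%:M.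

(* equivalence: conjugate by a fixed invertible matrix P (on generators, hence on B_n) *)
Definition equiv_rep {F : comUnitRingType} (n : nat) (A B : nat -> 'M[F]_(n.+1)) : Prop :=
  exists P : 'M[F]_(n.+1), P \in unitmx /\
    forall i, (1 <= i <= n.-1)%N -> A i = invmx P *m B i *m P.

Section Mats.
Variable F : fieldType.
Definition mx3 (l : seq (seq F)) : 'M[F]_3 :=
  \matrix_(r < 3, c < 3) nth 0 (nth [::] l r) c.
Definition M1 (m22 m23 : F) : 'M[F]_3 :=
  mx3 [:: [:: 1; 0; 0]; [:: 0; m22; m23]; [:: 0; (1 - m22) / m23; 0]].
Definition M2 (m22 m12 : F) : 'M[F]_3 :=
  mx3 [:: [:: 0; m12; 0]; [:: (1 - m22) / m12; m22; 0]; [:: 0; 0; 1]].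
Definition M3 (m22 m32 : F) : 'M[F]_3 :=
  mx3 [:: [:: 1; - (m22 / m32); 0]; [:: 0; m22; 0]; [:: 0; m32; 1]].
Definition M4 (m22 m23 : F) : 'M[F]_3 :=
  mx3 [:: [:: 1; 0; 0]; [:: - (m22 / m23); m22; m23]; [:: 0; 0; 1]].
Definition M5 (m23 m32 : F) : 'M[F]_3 :=
  mx3 [:: [:: 1; 0; 0]; [:: 0; 0; m23]; [:: 0; m32; 1 - m23 * m32]].
Definition M6 (m12 m21 : F) : 'M[F]_3 :=
  mx3 [:: [:: 1 - m12 * m21; m12; 0]; [:: m21; 0; 0]; [:: 0; 0; 1]].
Definition M7 (m23 m32 : F) : 'M[F]_3 :=
  mx3 [:: [:: 1; 0; 0]; [:: 0; 0; m23]; [:: 0; m32; 0]].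
Definition M8 (m12 m21 : F) : 'M[F]_3 :=
  mx3 [:: [:: 0; m12; 0]; [:: m21; 0; 0]; [:: 0; 0; 1]].

(* the eight families, with their parameter conditions (parameters a, b in the order
   written in the definitions above) *)
Definition nu_family (j : nat) (a b : F) : option 'M[F]_3 :=
  match j with
  | 1 => if (a != 1) && (b != 0) then Some (M1 a b) else None
  | 2 => if (a != 1) && (b != 0) then Some (M2 a b) else None
  | 3 => if a * b != 0 then Some (M3 a b) else None
  | 4 => if b * a != 0 then Some (M4 a b) else None
  | 5 => if a * b != 0 then Some (M5 a b) else None
  | 6 => if a * b != 0 then Some (M6 a b) else None
  | 7 => if a * b != 0 then Some (M7 a b) else None
  | 8 => if a * b != 0 then Some (M8 a b) else None
  | _ => None
  end.
End Mats.

(** The commutation of [sigma_1] with [sigma_3] forces the corner entries of [M]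
    to vanish and couples its diagonal corners with the off-diagonal entries:
    [(M11 - 1) M23 = (M11 - 1) M32 = 0] and [(M33 - 1) M12 = (M33 - 1) M21 = 0].
    This splits the argument into three cases, [M11 <> 1], [M33 <> 1] and
    [M11 = M33 = 1]; in each, the entries of the braid relation
    [sigma_1 sigma_2 sigma_1 = sigma_2 sigma_1 sigma_2], together with
    [det M <> 0] and [M <> 1], leave exactly the families [M_j]. So [M] is
    itself one of the [M_j] and the identity conjugates [nu] to [nu_j]. *)
From mathcomp Require Import all_boot all_algebra.
From mathcomp Require Import reals complex.
From mathcomp Require Import zify ring.
Set Implicit Arguments. Unset Strict Implicit. Unset Printing Implicit Defensive.
Import GRing.Theory.
Local Open Scope ring_scope.

Section LocalWindow.
Variable F : pzRingType.
Implicit Types M : 'M[F]_3.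

(* [Nat.sub] rather than [subn], so that entries at numeral indices reduce by [simpl]. *)
Definition local_window M (i r c : nat) : F :=
  if [&& (i.-1 <= r)%N, (r < i.+2)%N, (i.-1 <= c)%N & (c < i.+2)%N]
  then M (inord (Nat.sub r i.-1)) (inord (Nat.sub c i.-1)) else (r == c)%:R.

Lemma local_mxE n i M r c : (r < n.+1)%N -> (c < n.+1)%N ->
  local_mx n i M (inord r) (inord c) = local_window M i r c.
Proof.
move=> rn cn; have rc : (inord r == inord c :> 'I_n.+1) = (r == c).
  by rewrite -val_eqE /= !inordK.
by rewrite mxE rc !inordK.
Qed.

Lemma local_window_out M i r c : (i <= 3)%N -> (r < 5)%N -> (5 <= c)%N ->
  local_window M i r c = 0.
Proof.
move=> i3 r5 c5; rewrite /local_window ifF; last by apply/negbTE/and4P => -[_ _ _]; lia.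
by rewrite (_ : r == c = false) //; apply/eqP; lia.
Qed.

Lemma mul_local_mxE n i M (X : 'M[F]_n.+1) r c :
  (4 <= n)%N -> (i <= 3)%N -> (r < 5)%N ->
  (local_mx n i M *m X) (inord r) c = \sum_(0 <= k < 5) local_window M i r k * X (inord k) c.
Proof.
move=> n4 i3 r5; rewrite big_mkord mxE.
rewrite (big_ord_widen n.+1 (fun k => local_window M i r k * X (inord k) c)); last by lia.
rewrite [RHS]big_mkcond; apply: eq_bigr => k _.
rewrite -[k in local_mx _ _ _ _ k]inord_val local_mxE ?inord_val //; last by lia.
by case: ltnP => // k5; rewrite local_window_out ?mul0r.
Qed.

Lemma mul2_local_mxE n i j M r c :
  (4 <= n)%N -> (i <= 3)%N -> (r < 5)%N -> (c < 5)%N ->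
  (local_mx n i M *m local_mx n j M) (inord r) (inord c) =
  \sum_(0 <= k < 5) local_window M i r k * local_window M j k c.
Proof.
move=> n4 i3 r5 c5; rewrite mul_local_mxE //; apply: eq_big_nat => k /andP[_ k5].
by rewrite local_mxE //; lia.
Qed.

Lemma mul3_local_mxE n i j l M r c :
  (4 <= n)%N -> (i <= 3)%N -> (j <= 3)%N -> (r < 5)%N -> (c < 5)%N ->
  (local_mx n i M *m local_mx n j M *m local_mx n l M) (inord r) (inord c) =
  \sum_(0 <= k < 5) local_window M i r k *
    \sum_(0 <= h < 5) local_window M j k h * local_window M l h c.
Proof.
move=> n4 i3 j3 r5 c5; rewrite -mulmxA mul_local_mxE //.
by apply: eq_big_nat => k /andP[_ k5]; rewrite mul2_local_mxE.
Qed.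

Lemma local_mx1 n i : local_mx n i (1%:M : 'M[F]_3) = 1%:M.
Proof.
apply/matrixP => r c; rewrite !mxE; case: ifP => // /and4P[r1 r2 c1 c2].
rewrite -val_eqE /= !inordK; try lia.
by congr (nat_of_bool _)%:R; apply/eqP/eqP => [E|->//]; apply/val_inj => /=; lia.
Qed.

Lemma local_mx_first_block m M :
  local_mx m.+2 1 M = block_mx M 0 0 1%:M :> 'M[F]_(3 + m).
Proof.
apply/matrixP => r c; rewrite -[r]splitK -[c]splitK.
case: (split r) => r'; case: (split c) => c' /=;
  rewrite ?block_mxEul ?block_mxEur ?block_mxEdl ?block_mxEdr !mxE /=
          ?eq_rshift ?ltn_ord ?andbF //=.
- by rewrite !subn0 !inord_val.
all: by rewrite -val_eqE /=; case: eqP => //; move: (ltn_ord r') (ltn_ord c'); lia.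
Qed.

End LocalWindow.

Lemma unitmx_local_mx_first (F : comUnitRingType) m (M : 'M[F]_3) :
  (local_mx m.+2 1 M \in unitmx) = (M \in unitmx).
Proof. by rewrite local_mx_first_block !unitmxE (det_ublock M 0) det1 mulr1. Qed.

Lemma big_nat5 (R : nmodType) (G : nat -> R) :
  \sum_(0 <= k < 5) G k = G 0%N + G 1%N + G 2%N + G 3%N + G 4%N.
Proof. by rewrite unlock /= addr0 !addrA. Qed.

Lemma eq0_of_sub (F : zmodType) (x y p : F) : x = y -> p = x - y -> p = 0.
Proof. by move=> -> ->; rewrite subrr. Qed.

Lemma eq0_of_mulf (F : idomainType) (x y : F) : x != 0 -> x * y = 0 -> y = 0.
Proof. by move=> /negbTE x_neq0 /eqP; rewrite mulf_eq0 x_neq0 => /eqP. Qed.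

Lemma subr_eq_l (V : zmodType) (x y : V) : (x - y == x) = (y == 0).
Proof. by rewrite -[LHS]subr_eq0 addrAC subrr add0r oppr_eq0. Qed.

Lemma oppr_div_eq (F : fieldType) (e x y : F) : y != 0 -> e + x * y = 0 -> - (e / y) = x.
Proof. by move=> y_neq0 /eqP; rewrite addr_eq0 => /eqP ->; rewrite mulNr opprK mulfK. Qed.

Section Mx3.
Variable F : fieldType.

Lemma mx3_inordE (l : seq (seq F)) r c : (r < 3)%N -> (c < 3)%N ->
  mx3 l (inord r) (inord c) = nth 0 (nth [::] l r) c.
Proof. by move=> r3 c3; rewrite mxE !inordK. Qed.

Lemma mx3_eta (M : 'M[F]_3) : M = mx3
  [:: [:: M (inord 0) (inord 0); M (inord 0) (inord 1); M (inord 0) (inord 2)];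
      [:: M (inord 1) (inord 0); M (inord 1) (inord 1); M (inord 1) (inord 2)];
      [:: M (inord 2) (inord 0); M (inord 2) (inord 1); M (inord 2) (inord 2)]].
Proof.
apply/matrixP => r c; rewrite !mxE.
by case: r => [[|[|[|?]]] ?]; case: c => [[|[|[|?]]] ?] //=;
  congr (M _ _); apply/val_inj; rewrite /= inordK.
Qed.

Lemma mx3_1 : mx3 [:: [:: 1; 0; 0]; [:: 0; 1; 0]; [:: 0; 0; 1]] = 1%:M :> 'M[F]_3.
Proof.
apply/matrixP => r c; rewrite !mxE.
by case: r => [[|[|[|?]]] ?]; case: c => [[|[|[|?]]] ?].
Qed.

Lemma det_mx3 (a b c d e f g h k : F) :
  \det (mx3 [:: [:: a; b; c]; [:: d; e; f]; [:: g; h; k]]) =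
  a * (e * k - f * h) - b * (d * k - f * g) + c * (d * h - e * g).
Proof.
rewrite (expand_det_row _ 0) !big_ord_recr big_ord0 /cofactor /=.
rewrite !(expand_det_row _ 0) !big_ord_recr !big_ord0 /cofactor /= !det_mx11 !mxE /=.
ring.
Qed.

Lemma unitmx_mx3 (a b c d e f g h k : F) :
  (mx3 [:: [:: a; b; c]; [:: d; e; f]; [:: g; h; k]] \in unitmx) =
  (a * (e * k - f * h) - b * (d * k - f * g) + c * (d * h - e * g) != 0).
Proof. by rewrite unitmxE unitfE det_mx3. Qed.

Definition in_nu_family (M : 'M[F]_3) : Prop :=
  exists j a b, (1 <= j <= 8)%N /\ nu_family j a b = Some M.

End Mx3.

Local Notation tridiag a b d e f h k :=
  (mx3 [:: [:: a; b; 0]; [:: d; e; f]; [:: 0; h; k]]).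

Section HomogeneousLocal.
Variables (F : fieldType) (n : nat).
Hypothesis n_ge4 : (4 <= n)%N.
Implicit Types M : 'M[F]_3.

Lemma homog_3local_unitmx M : homog_3local n M -> M \in unitmx.
Proof.
case=> unit_local _ _; case: n n_ge4 unit_local => [|[|m]] // _ unit_local.
by rewrite -(@unitmx_local_mx_first _ m) unit_local.
Qed.

Lemma homog_3local_braidE M r c : homog_3local n M -> (r < 5)%N -> (c < 5)%N ->
  \sum_(0 <= k < 5) local_window M 1 r k *
    \sum_(0 <= l < 5) local_window M 2 k l * local_window M 1 l c =
  \sum_(0 <= k < 5) local_window M 2 r k *
    \sum_(0 <= l < 5) local_window M 1 k l * local_window M 2 l c.
Proof.
case=> _ braid _ r5 c5; rewrite -!(@mul3_local_mxE _ n) //.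
by rewrite braid //; lia.
Qed.

Lemma homog_3local_commE M r c : homog_3local n M -> (r < 5)%N -> (c < 5)%N ->
  \sum_(0 <= k < 5) local_window M 1 r k * local_window M 3 k c =
  \sum_(0 <= k < 5) local_window M 3 r k * local_window M 1 k c.
Proof.
case=> _ _ comm r5 c5; rewrite -!(@mul2_local_mxE _ n) //.
by rewrite comm //; lia.
Qed.

(* [comm_entry rep r c] and [braid_entry rep r c] prove [p = 0] when [p] is, up to
   sign, the difference of the two sides of entry [(r, c)] of the commutation,
   resp. braid, relation. Indices start at 0 and live in the top-left 5x5 block,
   where sigma_1, sigma_2, sigma_3 act on the rows 0-2, 1-3, 2-4. *)
Ltac local_entry E :=
  have := E; rewrite !big_nat5 /local_window /= ?mx3_inordE //=;
  first [ move/eq0_of_sub; apply; ring | move/esym/eq0_of_sub; apply; ring ].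
Ltac comm_entry rep r c := local_entry (homog_3local_commE (r := r) (c := c) rep isT isT).
Ltac braid_entry rep r c := local_entry (homog_3local_braidE (r := r) (c := c) rep isT isT).

Lemma homog_3local_corners0 (a b c d e f g h k : F) :
  homog_3local n (mx3 [:: [:: a; b; c]; [:: d; e; f]; [:: g; h; k]]) -> c = 0 /\ g = 0.
Proof.
move=> rep; split; apply/eqP; rewrite -[_ == 0]orbb -mulf_eq0; apply/eqP.
- by comm_entry rep 0%N 4%N.
- by comm_entry rep 4%N 0%N.
Qed.

Lemma ulblock_in_nu_family (a b d e : F) : a != 1 ->
  homog_3local n (tridiag a b d e 0 0 1) -> in_nu_family (tridiag a b d e 0 0 1).
Proof.
move=> a_neq1 rep.
have := homog_3local_unitmx rep.
rewrite unitmx_mx3 ?(mul0r, mulr0, mulr1, subr0, addr0) => det_neq0.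
have Ba : a * (a + b * d - 1) = 0 by braid_entry rep 0%N 0%N.
have Bb : a * e * b = 0 by braid_entry rep 0%N 1%N.
have Bd : a * e * d = 0 by braid_entry rep 1%N 0%N.
have Be : e * (1 - b * d - e) = 0 by braid_entry rep 2%N 2%N.
have [a0|a_neq0] := eqVneq a 0.
  move: det_neq0; rewrite a0 mul0r sub0r oppr_eq0 => bd_neq0.
  have [e0|e_neq0] := eqVneq e 0.
    by exists 8%N, b, d; rewrite /= bd_neq0 e0.
  have e_def : 1 - b * d = e by apply/subr0_eq/(eq0_of_mulf e_neq0).
  have b_neq0 : b != 0 by apply: contraNneq bd_neq0 => ->; rewrite mul0r.
  have e_neq1 : e != 1 by rewrite -e_def subr_eq_l.
  exists 2%N, e, b; rewrite /= e_neq1 b_neq0 /M2 (_ : (1 - e) / b = d) //.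
  by rewrite -e_def; field.
have ad1 : a + b * d = 1 by apply/subr0_eq/(eq0_of_mulf a_neq0).
have e0 : e = 0.
  apply/eqP; apply: contraNT a_neq1 => e_neq0.
  have ae_neq0 : a * e != 0 by rewrite mulf_neq0.
  by rewrite -ad1 (eq0_of_mulf ae_neq0 Bb) mul0r addr0.
have bd_neq0 : b * d != 0 by apply: contra_neq a_neq1 => bd0; rewrite -ad1 bd0 addr0.
exists 6%N, b, d; rewrite /= bd_neq0 /M6 e0 (_ : 1 - b * d = a) //.
by rewrite -ad1 addrK.
Qed.

Lemma drblock_in_nu_family (e f h k : F) : k != 1 ->
  homog_3local n (tridiag 1 0 0 e f h k) -> in_nu_family (tridiag 1 0 0 e f h k).
Proof.
move=> k_neq1 rep.
have := homog_3local_unitmx rep.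
rewrite unitmx_mx3 ?(mul0r, mulr0, mul1r, subr0, addr0) => det_neq0.
have Be : e * (e - (1 - f * h)) = 0 by braid_entry rep 1%N 1%N.
have Bf : e * k * f = 0 by braid_entry rep 1%N 2%N.
have Bh : e * k * h = 0 by braid_entry rep 2%N 1%N.
have Bk : k * (1 - f * h - k) = 0 by braid_entry rep 3%N 3%N.
have [e0|e_neq0] := eqVneq e 0.
  move: det_neq0; rewrite e0 mul0r sub0r oppr_eq0 => fh_neq0.
  have [k0|k_neq0] := eqVneq k 0.
    by exists 7%N, f, h; rewrite /= fh_neq0 k0.
  have k_def : 1 - f * h = k by apply/subr0_eq/(eq0_of_mulf k_neq0).
  by exists 5%N, f, h; rewrite /= fh_neq0 /M5 k_def.
have e_def : e = 1 - f * h by apply/subr0_eq/(eq0_of_mulf e_neq0).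
have k0 : k = 0.
  apply/eqP; apply: contraNT k_neq1 => k_neq0.
  have ek_neq0 : e * k != 0 by rewrite mulf_neq0.
  move: Bk; rewrite (eq0_of_mulf ek_neq0 Bf) (eq0_of_mulf ek_neq0 Bh) mul0r subr0.
  by move/(eq0_of_mulf k_neq0)/subr0_eq => <-.
move: det_neq0; rewrite k0 mulr0 sub0r oppr_eq0 => fh_neq0.
have f_neq0 : f != 0 by apply: contraNneq fh_neq0 => ->; rewrite mul0r.
have e_neq1 : e != 1 by rewrite e_def subr_eq_l.
exists 1%N, e, f; rewrite /= e_neq1 f_neq0 /M1 (_ : (1 - e) / f = h) //.
by rewrite e_def; field.
Qed.

Lemma unit_corners_in_nu_family (b d e f h : F) : homog_3local n (tridiag 1 b d e f h 1) ->
  tridiag 1 b d e f h 1 != 1%:M -> in_nu_family (tridiag 1 b d e f h 1).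
Proof.
move=> rep N_neq1.
have := homog_3local_unitmx rep.
rewrite unitmx_mx3 ?(mul0r, mulr0, mul1r, mulr1, subr0, addr0) => det_neq0.
have Cbf : b * f = 0 by comm_entry rep 1%N 3%N.
have Cdh : d * h = 0 by comm_entry rep 3%N 1%N.
have Bbd : b * d = 0 by braid_entry rep 0%N 0%N.
have Bb : b * (e + b * h) = 0 by braid_entry rep 0%N 1%N.
have Bd : d * (e + d * f) = 0 by braid_entry rep 1%N 0%N.
have Be : e * (f * h) + (e + b * h + d * f) * (e - 1) = 0 by braid_entry rep 1%N 1%N.
have Bf : f * (e + d * f) = 0 by braid_entry rep 2%N 3%N.
have Bh : h * (e + b * h) = 0 by braid_entry rep 3%N 2%N.
have Bfh : f * h = 0 by braid_entry rep 3%N 3%N.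
have e_neq0 : e != 0 by move: det_neq0; rewrite Bfh Bbd !subr0.
have [b0|b_neq0] := eqVneq b 0; last first.
  have f0 := eq0_of_mulf b_neq0 Cbf; have d0 := eq0_of_mulf b_neq0 Bbd.
  have ebh : e + b * h = 0 := eq0_of_mulf b_neq0 Bb.
  have h_neq0 : h != 0 by apply: contraNneq e_neq0 => h0; rewrite -ebh h0 mulr0 addr0.
  by exists 3%N, e, h; rewrite /= mulf_neq0 // /M3 (oppr_div_eq h_neq0 ebh) f0 d0.
have [d0|d_neq0] := eqVneq d 0.
  move: Be; rewrite b0 d0 Bfh mulr0 !mul0r !addr0 add0r.
  move/(eq0_of_mulf e_neq0)/subr0_eq => e1.
  move: Bf Bh; rewrite b0 d0 e1 !mul0r !addr0 !mulr1 => f0 h0.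
  by move: N_neq1; rewrite b0 d0 e1 f0 h0 mx3_1 eqxx.
have h0 := eq0_of_mulf d_neq0 Cdh.
have edf : e + d * f = 0 := eq0_of_mulf d_neq0 Bd.
have f_neq0 : f != 0 by apply: contraNneq e_neq0 => f0; rewrite -edf f0 mulr0 addr0.
by exists 4%N, e, f; rewrite /= mulf_neq0 // /M4 (oppr_div_eq f_neq0 edf) b0 h0.
Qed.

Lemma tridiag_in_nu_family (a b d e f h k : F) : homog_3local n (tridiag a b d e f h k) ->
  tridiag a b d e f h k != 1%:M -> in_nu_family (tridiag a b d e f h k).
Proof.
move=> rep N_neq1.
have Caf : (a - 1) * f = 0 by comm_entry rep 1%N 2%N.
have Cah : (a - 1) * h = 0 by comm_entry rep 2%N 1%N.
have Ckb : (k - 1) * b = 0 by comm_entry rep 2%N 3%N.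
have Ckd : (k - 1) * d = 0 by comm_entry rep 3%N 2%N.
have [a1|a_neq1] := eqVneq a 1; last first.
  have a1_neq0 : a - 1 != 0 by rewrite subr_eq0.
  have f0 := eq0_of_mulf a1_neq0 Caf; have h0 := eq0_of_mulf a1_neq0 Cah.
  have Bk : k * (1 - f * h - k) = 0 by braid_entry rep 3%N 3%N.
  have := homog_3local_unitmx rep.
  rewrite unitmx_mx3 f0 h0 ?(mul0r, mulr0, subr0, addr0) => det_neq0.
  have k_neq0 : k != 0 by apply: contraNneq det_neq0 => ->; rewrite !mulr0 subr0.
  have k1 : k = 1.
    by move: Bk; rewrite f0 mul0r subr0 => /(eq0_of_mulf k_neq0)/subr0_eq/esym.
  by move: rep; rewrite f0 h0 k1; exact: ulblock_in_nu_family.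
have [k1|k_neq1] := eqVneq k 1.
  by move: rep N_neq1; rewrite a1 k1; exact: unit_corners_in_nu_family.
have k1_neq0 : k - 1 != 0 by rewrite subr_eq0.
have b0 := eq0_of_mulf k1_neq0 Ckb; have d0 := eq0_of_mulf k1_neq0 Ckd.
by move: rep; rewrite a1 b0 d0; exact: drblock_in_nu_family.
Qed.

Lemma homog_3local_in_nu_family M : homog_3local n M -> M != 1%:M -> in_nu_family M.
Proof.
rewrite [M]mx3_eta => rep; have [c0 g0] := homog_3local_corners0 rep.
by move: rep; rewrite c0 g0; exact: tridiag_in_nu_family.
Qed.

End HomogeneousLocal.

Theorem theorem4p1 (R : realType) (n : nat) (M : 'M[R[i]]_3) :
  (4 <= n)%N ->
  homog_3local n M ->
  nontrivial_rep (fun i => local_mx n i M) ->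
  exists (j : nat) (a b : R[i]) (Mj : 'M[R[i]]_3),
    [/\ (1 <= j <= 8)%N, nu_family j a b = Some Mj &
        equiv_rep (fun i => local_mx n i M) (fun i => local_mx n i Mj)].
Proof.
move=> n_ge4 rep [i [_ local_neq1]].
have M_neq1 : M != 1%:M by apply: contraNneq local_neq1 => ->; rewrite local_mx1.
have [j [a [b [j_range M_family]]]] := homog_3local_in_nu_family n_ge4 rep M_neq1.
exists j, a, b, M; split => //.
by exists 1%:M; split => [|i' _]; rewrite ?unitmx1 // invmx1 mul1mx mulmx1.
Qed.
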